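(* Let $\lambda\in(g,1)$ with $g=\frac{\sqrt5-1}{2}$, let $\ell\in\mathbb{N}$ satisfy $1<\lambda^2+\cdots+\lambda^\ell$, and let $\mathcal{U}$ and $\mathcal{U}_a$ be as in the context. There exists a constant $c$ with $0<c<\lambda^\ell|\mathcal{U}|/4$ such that for every $n\ge1$ and every $a\in\{0,1\}^{(n-1)\ell}$, if $J\subset\mathcal{U}_a$ is an interval with $|J|\le c\lambda^{n\ell}$, then there exist $a',a''\in\{0,1\}^{\ell-1}$ with $$J\subset\mathcal{U}_{aa'0}\cap\mathcal{U}_{aa''1}.$$
   Context: For a finite word $a=a_1\dots a_n$ over $\{0,1\}$, $\xi(a)=\sum_{j=1}^n a_j\lambda^j$. Let $\mathcal{U}=(\alpha,\beta)$ with $\alpha=\frac{\lambda^\ell}{1-\lambda^\ell}$ and $\beta=\frac{\lambda}{1-\lambda}-\frac{\lambda^\ell}{1-\lambda^\ell}$, and for $a\in\{0,1\}^n$ let $\mathcal{U}_a=\xi(a)+\lambda^n\mathcal{U}$. Juxtaposition $aa'0$ denotes concatenation of words. $|J|$ denotes the length of an interval $J$. *)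

From Stdlib Require Import Reals List.
Open Scope R_scope.

Definition gold : R := (sqrt 5 - 1) / 2.

Fixpoint xi_from (lam : R) (k : nat) (a : list bool) : R :=
  match a with
  | nil => 0
  | b :: t => (if b then lam ^ k else 0) + xi_from lam (S k) t
  end.

Definition xi (lam : R) (a : list bool) : R := xi_from lam 1 a.

Fixpoint pow_sum_from2 (lam : R) (l : nat) : R :=
  match l with
  | O => 0
  | S O => 0
  | S m => pow_sum_from2 lam m + lam ^ l
  end.

Definition alpha (lam : R) (l : nat) : R := lam ^ l / (1 - lam ^ l).
Definition beta (lam : R) (l : nat) : R := lam / (1 - lam) - lam ^ l / (1 - lam ^ l).

Definition U (lam : R) (l : nat) (x : R) : Prop := alpha lam l < x < beta lam l.

(* U_a = xi(a) + lam^n U, n = |a| *)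
Definition Ua (lam : R) (l : nat) (a : list bool) (x : R) : Prop :=
  xi lam a + lam ^ length a * alpha lam l < x < xi lam a + lam ^ length a * beta lam l.

Definition is_interval (J : R -> Prop) : Prop :=
  forall x y z, J x -> J z -> x <= y <= z -> J y.

(* |J| <= L, expressed as: the diameter sup J - inf J is at most L *)
Definition length_le (J : R -> Prop) (L : R) : Prop :=
  forall x y, J x -> J y -> y - x <= L.

Definition subset (A B : R -> Prop) : Prop := forall x, A x -> B x.

From Stdlib Require Import Reals List Lra Lia Psatz Classical.
Open Scope R_scope.

(* The hypothesis 1 < lam^2 + ... + lam^l is equivalent to lam |U| > 1.  So
   for q - p = lam |U| the two children xi(w) + lam^(j+1) (p, q) and
   xi(w) + lam^(j+1) (1 + p, 1 + q) of a cylinder overlap in an interval of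
   length lam^(j+1) (lam |U| - 1), and choosing the digits one at a time puts
   any set of small diameter inside a single cylinder.  The self-similarity
   alpha = lam^l (1 + alpha), beta = lam + ... + lam^(l-1) + lam^l beta says
   that U lies in the union over |w| = l-1 of the cylinders U_(w b), for either
   last digit b.  The affine map y |-> xi(a) + lam^|a| y reduces U_a to U. *)

(* [Ua lam l a] is by definition [cylinder lam (alpha lam l) (beta lam l) a]. *)
Definition cylinder (lam p q : R) (w : list bool) (x : R) : Prop :=
  xi lam w + lam ^ length w * p < x < xi lam w + lam ^ length w * q.

Lemma xi_from_app lam k a w :
  xi_from lam k (a ++ w) = xi_from lam k a + xi_from lam (k + length a) w.
Proof.
  revert k; induction a as [|b t IH]; intros k; simpl.
  - rewrite Nat.add_0_r; ring.
  - rewrite IH, Nat.add_succ_r; simpl Nat.add; ring.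
Qed.

Lemma xi_from_succ lam k w : xi_from lam (S k) w = lam ^ k * xi lam w.
Proof.
  unfold xi; revert k; induction w as [|b t IH]; intros k; simpl.
  - ring.
  - rewrite (IH (S k)), (IH 1%nat); destruct b; simpl; ring.
Qed.

Lemma xi_app lam a w : xi lam (a ++ w) = xi lam a + lam ^ length a * xi lam w.
Proof.
  unfold xi at 1; rewrite xi_from_app.
  change (1 + length a)%nat with (S (length a)); rewrite (xi_from_succ lam (length a)); reflexivity.
Qed.

Lemma cylinder_app lam p q a w y : 0 < lam ->
  cylinder lam p q (a ++ w) (xi lam a + lam ^ length a * y) <-> cylinder lam p q w y.
Proof.
  intros Hlam; unfold cylinder; rewrite xi_app, length_app, pow_add.
  pose proof (pow_lt lam (length a) Hlam).
  split; intros [H1 H2]; split; nra.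
Qed.

Lemma cylinder_snoc lam p q w (b : bool) x :
  cylinder lam p q (w ++ b :: nil) x <->
  cylinder lam (lam * ((if b then 1 else 0) + p)) (lam * ((if b then 1 else 0) + q)) w x.
Proof.
  unfold cylinder; rewrite xi_app, length_app, pow_add; simpl.
  replace (xi lam (b :: nil)) with (if b then lam else 0) by (destruct b; unfold xi; simpl; ring).
  destruct b; split; intros [H1 H2]; split; lra.
Qed.

Lemma length_le_rescale (J : R -> Prop) s P L : 0 < P ->
  length_le J (P * L) -> length_le (fun y => J (s + P * y)) L.
Proof.
  intros HP HJ x y Hx Hy; pose proof (HJ _ _ Hx Hy).
  apply (Rmult_le_reg_l P); lra.
Qed.

Lemma cylinder_rescale lam p q a (J : R -> Prop) : 0 < lam ->
  subset J (cylinder lam p q a) ->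
  subset (fun y => J (xi lam a + lam ^ length a * y)) (fun y => p < y < q).
Proof.
  intros Hlam HJ y Hy.
  pose proof (proj1 (cylinder_app lam p q a nil y Hlam)) as Hnil.
  rewrite app_nil_r in Hnil; pose proof (Hnil (HJ _ Hy)) as Hy'.
  unfold cylinder, xi in Hy'; simpl in Hy'; lra.
Qed.

Lemma cylinder_unscale lam p q a w (J : R -> Prop) : 0 < lam ->
  subset (fun y => J (xi lam a + lam ^ length a * y)) (cylinder lam p q w) ->
  subset J (cylinder lam p q (a ++ w)).
Proof.
  intros Hlam HJ x Hx.
  assert (HP : 0 < lam ^ length a) by (apply pow_lt, Hlam).
  set (y := (x - xi lam a) / lam ^ length a).
  assert (Hxy : x = xi lam a + lam ^ length a * y) by (unfold y; field; lra).
  rewrite Hxy in Hx |- *; apply cylinder_app, HJ, Hx; exact Hlam.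
Qed.

Lemma cylinder_cover lam k : 1 / 2 <= lam < 1 ->
  forall (p q d : R) (J : R -> Prop), 1 + d < q - p ->
  (* the union of the level-k cylinders is (lam^k p, lam + ... + lam^k + lam^k q) *)
  subset J (fun x => lam ^ k * p < x < lam * (1 - lam ^ k) / (1 - lam) + lam ^ k * q) ->
  length_le J (lam ^ k * d) ->
  exists w, length w = k /\ subset J (cylinder lam p q w).
Proof.
  intros Hlam; induction k as [|k IH]; intros p q d J Hpq HJ Hlen.
  - exists nil; split; [reflexivity|]; intros x Hx.
    destruct (HJ x Hx); unfold cylinder, xi; simpl in *.
    assert (lam * (1 - 1) / (1 - lam) = 0) by (field; lra); lra.
  - assert (Hk : 0 < lam ^ k) by (apply pow_lt; lra).
    set (M := lam ^ k * lam).
    assert (HM : 0 < M) by (unfold M; nra).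
    destruct (IH (lam * p) (lam * (1 + q)) (lam * d) J) as [w [Hw HJw]].
    + nra.
    + intros x Hx; destruct (HJ x Hx) as [H1 H2]; simpl in H1, H2.
      replace (lam * (1 - lam * lam ^ k) / (1 - lam) + lam * lam ^ k * q)
        with (lam * (1 - lam ^ k) / (1 - lam) + lam ^ k * (lam * (1 + q))) in H2
        by (field; lra).
      split; nra.
    + intros x y Hx Hy; pose proof (Hlen x y Hx Hy); simpl in *; nra.
    + destruct (classic (exists x0, J x0 /\ x0 <= xi lam w + M * (1 + p)))
        as [[x0 [Hx0 Hle]]|Hnone].
      * exists (w ++ false :: nil); split; [rewrite length_app; simpl; lia|].
        intros x Hx; apply cylinder_snoc.
        pose proof (HJw x Hx) as [H1 H2]; pose proof (Hlen x0 x Hx0 Hx).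
        unfold cylinder in *; rewrite Hw in *; simpl in *.
        assert (M * (1 + p + d) < M * q) by (apply Rmult_lt_compat_l; lra).
        unfold M in *; split; nra.
      * exists (w ++ true :: nil); split; [rewrite length_app; simpl; lia|].
        intros x Hx; apply cylinder_snoc.
        pose proof (HJw x Hx) as [H1 H2].
        assert (xi lam w + M * (1 + p) < x).
        { apply Rnot_le_lt; intros Hle; apply Hnone; exists x; auto. }
        unfold cylinder in *; rewrite Hw in *; unfold M in *; split; nra.
Qed.

Lemma pow_sum_from2_geom lam k :
  (1 - lam) * pow_sum_from2 lam (S k) = lam ^ 2 * (1 - lam ^ k).
Proof.
  induction k as [|k IH].
  - simpl; ring.
  - change (pow_sum_from2 lam (S (S k))) with (pow_sum_from2 lam (S k) + lam ^ S (S k)).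
    rewrite Rmult_plus_distr_l, IH; simpl; ring.
Qed.

Lemma alpha_fixed lam k : 0 < lam < 1 ->
  lam ^ S k * (1 + alpha lam (S k)) = alpha lam (S k).
Proof.
  intros Hlam; assert (lam ^ S k < 1) by (apply pow_lt_1_compat; lra || lia).
  unfold alpha; field; lra.
Qed.

Lemma beta_fixed lam k : 0 < lam < 1 ->
  beta lam (S k) = lam * (1 - lam ^ k) / (1 - lam) + lam ^ S k * beta lam (S k).
Proof.
  intros Hlam; assert (lam ^ S k < 1) by (apply pow_lt_1_compat; lra || lia).
  unfold beta; simpl in *; field; lra.
Qed.

Lemma one_lt_lam_U_length lam l : 0 < lam < 1 -> 1 < pow_sum_from2 lam l ->
  1 < lam * (beta lam l - alpha lam l).
Proof.
  intros Hlam Hsum; destruct l as [|k]; [simpl in Hsum; lra|].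
  pose proof (pow_sum_from2_geom lam k) as Hgeom.
  assert (Ht : 0 < lam ^ k) by (apply pow_lt; lra).
  assert (Hu : lam ^ S k = lam * lam ^ k) by reflexivity.
  set (t := lam ^ k) in *; set (u := lam ^ S k) in *.
  assert (Hgap : 1 - lam < lam ^ 2 * (1 - t)) by nra.
  assert (Hu1 : u < 2 * lam - 1) by nra.
  assert (Hden : 0 < (1 - lam) * (1 - u)) by nra.
  assert (Hexpand : (lam * (beta lam (S k) - alpha lam (S k)) - 1) * ((1 - lam) * (1 - u))
                    = lam ^ 2 * (1 - u) - 2 * lam * u * (1 - lam) - (1 - lam) * (1 - u)).
  { unfold beta, alpha; fold u; field; lra. }
  assert (0 < (lam * (beta lam (S k) - alpha lam (S k)) - 1) * ((1 - lam) * (1 - u))).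
  { assert (0 < lam * u * (2 * lam - 1 - u)) by (apply Rmult_lt_0_compat; nra).
    assert ((1 - lam) * (1 - u) < (lam ^ 2 - lam * u) * (1 - u)) by nra.
    rewrite Hexpand; nra. }
  nra.
Qed.

Lemma U_subset_digit_cylinder lam c k (b : bool) : 1 / 2 <= lam < 1 ->
  1 + c * lam < lam * (beta lam (S k) - alpha lam (S k)) ->
  forall J : R -> Prop, subset J (U lam (S k)) -> length_le J (c * lam ^ S k) ->
  exists w, length w = k /\ subset J (Ua lam (S k) (w ++ b :: nil)).
Proof.
  intros Hlam Hc J HJ Hlen.
  assert (Hlam' : 0 < lam < 1) by lra.
  pose proof (alpha_fixed lam k Hlam') as Hal.
  pose proof (beta_fixed lam k Hlam') as Hbe.
  assert (Hu1 : lam ^ S k < 1) by (apply pow_lt_1_compat; lra || lia).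
  assert (Hu0 : 0 < lam ^ S k) by (apply pow_lt; lra).
  set (s := if b then 1 else 0).
  assert (Hs : 0 <= s <= 1) by (unfold s; destruct b; lra).
  set (al := alpha lam (S k)) in *; set (be := beta lam (S k)) in *.
  destruct (cylinder_cover lam k Hlam (lam * (s + al)) (lam * (s + be)) (c * lam) J)
    as [w [Hw HJw]].
  - lra.
  - intros x Hx; destruct (HJ x Hx) as [Hxal Hxbe]; fold al be in Hxal, Hxbe.
    replace (lam ^ k * (lam * (s + al))) with (lam ^ S k * s + lam ^ S k * al) by (simpl; ring).
    replace (lam ^ k * (lam * (s + be))) with (lam ^ S k * s + lam ^ S k * be) by (simpl; ring).
    split; nra.
  - intros x y Hx Hy; pose proof (Hlen x y Hx Hy); simpl in *; lra.
  - exists w; split; [exact Hw|].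
    intros x Hx; apply cylinder_snoc, HJw, Hx.
Qed.

Lemma gold_gt_half : 1 / 2 < gold.
Proof. unfold gold; pose proof (sqrt_sqrt 5); pose proof (sqrt_pos 5); nra. Qed.

Theorem corollary3p2 (lam : R) (l : nat) :
  gold < lam < 1 ->
  1 < pow_sum_from2 lam l ->
  exists c : R,
    0 < c < lam ^ l * (beta lam l - alpha lam l) / 4 /\
    forall (n : nat) (a : list bool),
      (1 <= n)%nat ->
      length a = ((n - 1) * l)%nat ->
      forall J : R -> Prop,
        is_interval J ->
        subset J (Ua lam l a) ->
        length_le J (c * lam ^ (n * l)) ->
        exists a' a'' : list bool,
          length a' = (l - 1)%nat /\ length a'' = (l - 1)%nat /\
          subset J (fun x => Ua lam l (a ++ a' ++ false :: nil) x /\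
                             Ua lam l (a ++ a'' ++ true :: nil) x).
Proof.
  intros Hgold Hsum.
  assert (Hlam : 1 / 2 <= lam < 1) by (pose proof gold_gt_half; lra).
  pose proof (one_lt_lam_U_length lam l ltac:(lra) Hsum) as HE.
  destruct l as [|k]; [simpl in Hsum; lra|].
  assert (Hu : 0 < lam ^ S k) by (apply pow_lt; lra).
  set (E := beta lam (S k) - alpha lam (S k)) in *.
  exists (Rmin ((lam * E - 1) / 2) (lam ^ S k * E / 8)).
  assert (Hc : 0 < Rmin ((lam * E - 1) / 2) (lam ^ S k * E / 8)) by (apply Rmin_glb_lt; nra).
  pose proof (Rmin_l ((lam * E - 1) / 2) (lam ^ S k * E / 8)).
  pose proof (Rmin_r ((lam * E - 1) / 2) (lam ^ S k * E / 8)).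
  set (c := Rmin _ _) in *.
  split; [lra|].
  intros n a Hn Ha J _ HJ Hlen.
  assert (Hlen' : length_le J (lam ^ length a * (c * lam ^ S k))).
  { replace (lam ^ length a * (c * lam ^ S k)) with (c * lam ^ (n * S k))
      by (replace (n * S k)%nat with (length a + S k)%nat by nia; rewrite pow_add; ring).
    exact Hlen. }
  assert (HcE : 1 + c * lam < lam * E) by nra.
  set (J' := fun y => J (xi lam a + lam ^ length a * y)).
  assert (HJ' : subset J' (U lam (S k))) by (apply cylinder_rescale; [lra|exact HJ]).
  assert (Hlen'' : length_le J' (c * lam ^ S k)).
  { apply length_le_rescale; [apply pow_lt; lra | exact Hlen']. }
  destruct (U_subset_digit_cylinder lam c k false Hlam HcE J' HJ' Hlen'') as [a' [Ha' H']].
  destruct (U_subset_digit_cylinder lam c k true Hlam HcE J' HJ' Hlen'') as [a'' [Ha'' H'']].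
  exists a', a''; rewrite Nat.sub_succ, Nat.sub_0_r.
  split; [exact Ha'|]; split; [exact Ha''|].
  intros x Hx; split; apply (cylinder_unscale lam _ _ a _ J); auto; lra.
Qed.
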